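(* Let $1\to N\to G\to Q\to1$ be a short exact sequence of groups. (1) If $G$ involves all finite groups, then $N$ or $Q$ involves all finite groups. (2) If $N$ is finitely generated and involves all finite groups, then $G$ involves all finite groups.
   Context: A group $G$ involves all finite groups if for every finite group $F$ there is a finite index subgroup $G_0<G$ and an epimorphism $G_0\to F$. *)

From Stdlib Require Lists.List.
From mathcomp Require Import all_boot all_fingroup.
Set Implicit Arguments. Unset Strict Implicit. Unset Printing Implicit Defensive.

Record AbsGroup := MkGroup {
  carrier :> Type;
  gmul : carrier -> carrier -> carrier;
  gone : carrier;
  ginv : carrier -> carrier;
  gmulA : forall x y z, gmul x (gmul y z) = gmul (gmul x y) z;
  gmul1g : forall x, gmul gone x = x;
  gmulg1 : forall x, gmul x gone = x;
  gmulVg : forall x, gmul (ginv x) x = gone;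
  gmulgV : forall x, gmul x (ginv x) = gone
}.

Definition is_subgroup (G : AbsGroup) (H : G -> Prop) : Prop :=
  H (@gone G) /\ (forall x y, H x -> H y -> H (@gmul G x y)) /\
  (forall x, H x -> H (@ginv G x)).

Definition finite_index (G : AbsGroup) (H : G -> Prop) : Prop :=
  exists s : list G, forall g : G,
    exists t h, Stdlib.Lists.List.In t s /\ H h /\ g = @gmul G t h.

Definition is_hom (A B : AbsGroup) (f : A -> B) : Prop :=
  forall x y, f (@gmul A x y) = @gmul B (f x) (f y).

Definition epi_onto (G : AbsGroup) (H : G -> Prop) (gT : finGroupType)
    (f : G -> gT) : Prop :=
  (forall x y, H x -> H y -> f (@gmul G x y) = (f x * f y)%g) /\
  (forall z : gT, exists x, H x /\ f x = z).

Definition involves_all_finite (G : AbsGroup) : Prop :=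
  forall gT : finGroupType, exists H : G -> Prop,
    is_subgroup H /\ finite_index H /\ exists f : G -> gT, epi_onto H f.

Definition short_exact (N G Q : AbsGroup) (i : N -> G) (p : G -> Q) : Prop :=
  is_hom i /\ is_hom p /\
  (forall x y, i x = i y -> x = y) /\
  (forall q : Q, exists g, p g = q) /\
  (forall g : G, p g = @gone Q <-> exists n, i n = g).

Definition finitely_generated (G : AbsGroup) : Prop :=
  exists s : list G, forall H : G -> Prop,
    is_subgroup H -> (forall x, Stdlib.Lists.List.In x s -> H x) -> forall g, H g.

(** Every finite group embeds in an alternating group [Alt T] with [#|T| >= 5],
    which is simple with trivial centre, and a group involving a finite group
    involves all of its subgroups; so it suffices to consider such targets [A].

    (1) If [f] maps a finite-index subgroup [G0] of [G] onto [A], then the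
    image of [G0 ∩ N] is normal in [A], hence trivial or all of [A].  In the
    first case [f] factors through [p G0 <= Q]; in the second [G0 ∩ N] maps
    onto [A].  Given [F1] not involved in [N], embedding [F1 × F2] in a common
    [A] then shows that [Q] involves every [F2].

    (2) If [f] maps a finite-index subgroup [N0] of [N] onto [A], then [G]
    acts on [N] by conjugation and the stabiliser of the pair [(N0, f)] has
    finite index in [G]: whether [g] fixes it is decided by how the conjugates
    of the finitely many generators of [N] permute the finitely many cosets of
    [ker f].  Multiplying this stabiliser by [N0] gives a finite-index subgroup
    of [G] on which [g n ↦ f n] is a well-defined epimorphism onto [A];
    well-definedness is where [Z(A) = 1] is used. *)

From mathcomp Require Import all_boot all_fingroup all_solvable.
From mathcomp Require Import boolp zify.

Set Implicit Arguments. Unset Strict Implicit. Unset Printing Implicit Defensive.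
Import GroupScope.

Local Notation "x ** y" := (gmul x y) (at level 40, left associativity).

Lemma In_mem (T : eqType) (x : T) (s : seq T) : x \in s -> List.In x s.
Proof. by elim: s => //= y s IH; rewrite in_cons => /orP[/eqP ->|/IH]; [left|right]. Qed.

Lemma partial_choice (X Y : Type) (y0 : Y) (P : X -> Y -> Prop) :
  {h : X -> Y & forall x y, P x y -> P x (h x)}.
Proof.
apply: (@choice _ _ (fun x hx => forall y, P x y -> P x hx)) => x.
have [[y Pxy]|noP] := pselect (exists y, P x y); first by exists y.
by exists y0 => y Pxy; case: noP; exists y.
Qed.

(** * Abstract groups *)

Section AbsGroupTheory.
Variable G : AbsGroup.
Implicit Types (x y : G) (H : G -> Prop).

Lemma gmulKg x y : ginv x ** (x ** y) = y.
Proof. by rewrite gmulA gmulVg gmul1g. Qed.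

Lemma gmulKVg x y : x ** (ginv x ** y) = y.
Proof. by rewrite gmulA gmulgV gmul1g. Qed.

Lemma gmulgK x y : x ** y ** ginv y = x.
Proof. by rewrite -gmulA gmulgV gmulg1. Qed.

Lemma gmulI x : injective (gmul x).
Proof. by move=> y z E; rewrite -(gmulKg x y) E gmulKg. Qed.

Lemma gmul1_eq x y : x ** y = gone G -> ginv x = y.
Proof. by move=> E; apply: (@gmulI x); rewrite gmulgV E. Qed.

Lemma ginvK x : ginv (ginv x) = x.
Proof. by apply: gmul1_eq; rewrite gmulVg. Qed.

Lemma ginvM x y : ginv (x ** y) = ginv y ** ginv x.
Proof. by apply: gmul1_eq; rewrite -gmulA gmulKVg gmulgV. Qed.

Lemma ginv1 : ginv (gone G) = gone G.
Proof. by apply: gmul1_eq; rewrite gmulg1. Qed.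

Lemma subgroup1 H : is_subgroup H -> H (gone G).
Proof. by case. Qed.

Lemma subgroupM H x y : is_subgroup H -> H x -> H y -> H (x ** y).
Proof. by case=> _ [HM _]; apply: HM. Qed.

Lemma subgroupV H x : is_subgroup H -> H x -> H (ginv x).
Proof. by case=> _ [_ HV]; apply: HV. Qed.

Lemma finite_indexS H H' : finite_index H -> (forall x, H x -> H' x) ->
  finite_index H'.
Proof.
move=> [s cover] sHH'; exists s => g; have [t [h [ts [Hh ->]]]] := cover g.
by exists t, h; split=> //; split=> //; apply: sHH'.
Qed.

Lemma finite_indexT : finite_index (fun _ : G => True).
Proof.
by exists [:: gone G] => g; exists (gone G), g; rewrite gmul1g; split=> //; left.
Qed.

Lemma finite_index_fibers H H' (S : finType) (sg : G -> S) :
  finite_index H ->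
  (forall x y, H x -> H y -> sg x = sg y -> H' (ginv x ** y)) ->
  finite_index H'.
Proof.
move=> [s cover] sgH.
have [ch chP] := partial_choice (gone G) (fun (σ : S) u => H u /\ sg u = σ).
exists (List.flat_map (fun t => List.map (fun σ => t ** ch σ) (enum S)) s) => g.
have [t [h [ts [Hh ->]]]] := cover g.
have [Hc sgc] := chP (sg h) h (conj Hh erefl).
exists (t ** ch (sg h)), (ginv (ch (sg h)) ** h); split; last split.
- apply/List.in_flat_map; exists t; split=> //.
  by apply: (List.in_map (fun σ => t ** ch σ)); apply/In_mem; rewrite mem_enum.
- exact: sgH.
- by rewrite -gmulA gmulKVg.
Qed.

End AbsGroupTheory.

Section Homomorphisms.
Variables (A B : AbsGroup) (f : A -> B).
Hypothesis f_hom : is_hom f.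

Lemma hom1 : f (gone A) = gone B.
Proof. by apply: (@gmulI _ (f (gone A))); rewrite -f_hom !gmulg1. Qed.

Lemma homV x : f (ginv x) = ginv (f x).
Proof. by apply/esym/gmul1_eq; rewrite -f_hom gmulgV hom1. Qed.

Lemma subgroup_preim (H : B -> Prop) : is_subgroup H -> is_subgroup (fun x => H (f x)).
Proof.
move=> sH; split; first by rewrite hom1; exact: subgroup1.
split=> [x y Hx Hy|x Hx]; first by rewrite f_hom; exact: subgroupM.
by rewrite homV; exact: subgroupV.
Qed.

Lemma subgroup_image (H : A -> Prop) :
  is_subgroup H -> is_subgroup (fun y => exists2 x, H x & f x = y).
Proof.
move=> sH; split; first by exists (gone A); rewrite ?hom1 //; exact: subgroup1.
split=> [_ _ [x Hx <-] [y Hy <-]|_ [x Hx <-]].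
  by exists (x ** y); [exact: subgroupM | rewrite f_hom].
by exists (ginv x); [exact: subgroupV | rewrite homV].
Qed.

Lemma finite_index_preim (H : B -> Prop) :
  is_subgroup H -> finite_index H -> finite_index (fun x => H (f x)).
Proof.
move=> sH [s cover].
have [ch chP] := partial_choice (gone A) (fun (t : B) (x : A) => H (ginv t ** f x)).
exists (List.map ch s) => x.
have [t [h [ts [Hh ft]]]] := cover (f x).
have Ht : H (ginv t ** f x) by rewrite ft gmulKg.
exists (ch t), (ginv (ch t) ** x); split; first exact: List.in_map.
split; last by rewrite gmulKVg.
rewrite f_hom homV.
have := subgroupM sH (subgroupV sH (chP t x Ht)) Ht.
by rewrite ginvM ginvK -gmulA gmulKVg.
Qed.

Lemma finite_index_image (H : A -> Prop) : (forall y, exists x, f x = y) ->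
  finite_index H -> finite_index (fun y => exists2 x, H x & f x = y).
Proof.
move=> f_surj [s cover]; exists (List.map f s) => y.
have [x <-] := f_surj y; have [t [h [ts [Hh ->]]]] := cover x.
exists (f t), (f h); split; first exact: List.in_map.
by rewrite f_hom; split=> //; exists h.
Qed.

End Homomorphisms.

Definition hom_on (G : AbsGroup) (H : G -> Prop) (gT : finGroupType) (f : G -> gT) :=
  forall x y, H x -> H y -> f (x ** y) = f x * f y.

Section PartialHom.
Variables (G : AbsGroup) (H : G -> Prop) (gT : finGroupType) (f : G -> gT).
Hypotheses (H_sub : is_subgroup H) (f_hom : hom_on H f).

Lemma hom_on1 : f (gone G) = 1.
Proof.
have H1 := subgroup1 H_sub.
by apply: (mulgI (f (gone G))); rewrite -f_hom // gmulg1 mulg1.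
Qed.

Lemma hom_onV x : H x -> f (ginv x) = (f x)^-1.
Proof.
move=> Hx; apply: (mulgI (f x)).
by rewrite -f_hom ?gmulgV ?hom_on1 ?mulgV //; exact: subgroupV.
Qed.

Definition kerf x := H x /\ f x = 1.

Lemma kerf_subgroup : is_subgroup kerf.
Proof.
split; first by split; [exact: subgroup1 | exact: hom_on1].
split=> [x y [Hx fx] [Hy fy]|x [Hx fx]].
  by split; [exact: subgroupM | rewrite f_hom // fx fy mulg1].
by split; [exact: subgroupV | rewrite hom_onV // fx invg1].
Qed.

Lemma finite_index_kerf : finite_index H -> finite_index kerf.
Proof.
move=> fiH; apply: (finite_index_fibers (sg := f) fiH) => x y Hx Hy fxy.
split; first exact: subgroupM (subgroupV H_sub Hx) Hy.
by rewrite f_hom ?hom_onV ?fxy ?mulVg //; exact: subgroupV.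
Qed.

(* [u] and [v] are congruent modulo the normal core of [kerf]. *)
Definition core_eq u v := forall x, kerf (ginv (u ** x) ** (v ** x)).

Lemma core_eq_f u v : core_eq u v -> (H u <-> H v) /\ (H u -> f v = f u).
Proof.
move=> /(_ (gone G)); rewrite !gmulg1 => -[Hk fk].
have Hk' : H (ginv v ** u) by move: (subgroupV H_sub Hk); rewrite ginvM ginvK.
split; first split=> [Hu|Hv].
- by rewrite -(gmulKVg u v); exact: subgroupM.
- by rewrite -(gmulKVg v u); exact: subgroupM.
by move=> Hu; rewrite -(gmulKVg u v) f_hom // fk mulg1.
Qed.

Lemma core_eq_subgroup (a b : G -> G) : is_hom a -> is_hom b ->
  is_subgroup (fun m => core_eq (a m) (b m)).
Proof.
move=> a_hom b_hom; split; [|split].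
- move=> x; rewrite (hom1 a_hom) (hom1 b_hom) gmulVg.
  exact: subgroup1 kerf_subgroup.
- move=> m m' Em Em' x; rewrite a_hom b_hom.
  have -> : ginv (a m ** a m' ** x) ** (b m ** b m' ** x) =
      ginv (a m' ** x) ** (b m' ** x) **
      (ginv (a m ** (b m' ** x)) ** (b m ** (b m' ** x))).
    by rewrite !ginvM !gmulA !gmulgK.
  exact: subgroupM kerf_subgroup (Em' x) (Em _).
- move=> m Em x; rewrite (homV a_hom) (homV b_hom).
  have -> : ginv (ginv (a m) ** x) ** (ginv (b m) ** x) =
      ginv (ginv (a m ** (ginv (b m) ** x)) ** (b m ** (ginv (b m) ** x))).
    by rewrite gmulKVg !ginvM !ginvK !gmulA.
  exact: subgroupV kerf_subgroup (Em _).
Qed.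

Lemma core_eq_cover (r : list G) u v :
  (forall x, exists t k, List.In t r /\ kerf k /\ x = t ** k) ->
  (forall t, List.In t r -> kerf (ginv (u ** t) ** (v ** t))) -> core_eq u v.
Proof.
move=> cover Er x; have [t [k [tr [Kk ->]]]] := cover x.
have -> : ginv (u ** (t ** k)) ** (v ** (t ** k)) =
    ginv k ** (ginv (u ** t) ** (v ** t)) ** k by rewrite !ginvM !gmulA.
apply: (subgroupM kerf_subgroup _ Kk).
exact: subgroupM kerf_subgroup (subgroupV kerf_subgroup Kk) (Er t tr).
Qed.

Definition preserves (a : G -> G) :=
  forall n, (H n <-> H (a n)) /\ (H n -> f (a n) = f n).

Section Stabilizer.
Variables (X : AbsGroup) (c : X -> G -> G).
Hypotheses (c_hom : forall g, is_hom (c g))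
  (cM : forall g h n, c (g ** h) n = c h (c g n)) (c1 : forall n, c (gone X) n = n).

Lemma preserves_subgroup : is_subgroup (fun g => preserves (c g)).
Proof.
split; [|split].
- by move=> n; rewrite c1.
- move=> g h Pg Ph n; rewrite cM; have [E1 E2] := Pg n; have [E1' E2'] := Ph (c g n).
  split; first exact: iff_trans E1 E1'.
  by move=> Hn; rewrite E2' ?E2 //; apply/E1.
- move=> g Pg n; have [E1 E2] := Pg (c (ginv g) n).
  rewrite -cM gmulVg c1 in E1 E2; split; first exact: iff_sym E1.
  by move=> Hn; rewrite E2 //; apply/E1.
Qed.

Lemma kerf_coset_index (r : list G) :
  (forall x, exists t k, List.In t r /\ kerf k /\ x = t ** k) ->
  {idx : G -> 'I_(size r) & forall x, kerf (ginv (List.nth (idx x) r (gone G)) ** x)}.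
Proof.
move=> cover.
apply: (@choice _ _ (fun x (j : 'I_(size r)) => kerf (ginv (List.nth j r (gone G)) ** x))).
move=> x; have [t [k [tr [Kk ->]]]] := cover x.
have [j [/ltP jr <-]] := List.In_nth r t (gone G) tr.
by exists (Ordinal jr); rewrite gmulKg.
Qed.

Lemma finite_index_preserves : finitely_generated G -> finite_index H ->
  finite_index (fun g => preserves (c g)).
Proof.
move=> [s gen] /finite_index_kerf[r cover]; have [idx idxP] := kerf_coset_index cover.
(* [code g] records into which coset of [kerf] the conjugate by [g] of each
   generator sends each coset representative. *)
pose code g : {ffun 'I_(size s) * 'I_(size r) -> 'I_(size r)} :=
  [ffun kj : 'I_(size s) * 'I_(size r) =>
     idx (c g (List.nth kj.1 s (gone G)) ** List.nth kj.2 r (gone G))].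
apply: (finite_index_fibers (sg := code) (@finite_indexT X)) => x y _ _ Exy.
have Ecore m : core_eq (c x m) (c y m).
  apply: (gen _ (core_eq_subgroup (c_hom x) (c_hom y))) => z zs.
  apply: (core_eq_cover cover) => t tr.
  have [k [/ltP ks zE]] := List.In_nth s z (gone G) zs.
  have [j [/ltP jr tE]] := List.In_nth r t (gone G) tr.
  move/ffunP/(_ (Ordinal ks, Ordinal jr)): Exy; rewrite !ffunE /= zE tE => Eidx.
  have := subgroupM kerf_subgroup
    (subgroupV kerf_subgroup (idxP (c x z ** t))) (idxP (c y z ** t)).
  by rewrite Eidx ginvM ginvK -gmulA gmulKVg.
move=> n; have := core_eq_f (Ecore (c (ginv x) n)).
by rewrite -!cM gmulVg c1.
Qed.

End Stabilizer.

End PartialHom.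

(** * Involvement *)

Definition involves (G : AbsGroup) (gT : finGroupType) :=
  exists H : G -> Prop, is_subgroup H /\ finite_index H /\ exists f : G -> gT, epi_onto H f.

Definition involves_set (G : AbsGroup) (gT : finGroupType) (A : {set gT}) :=
  exists H (f : G -> gT), [/\ is_subgroup H, finite_index H, hom_on H f,
    forall x, H x -> f x \in A & forall z, z \in A -> exists2 x, H x & f x = z].

Section Involvement.
Variables (G : AbsGroup) (gT : finGroupType).

Lemma involves_subg_set (A : {group gT}) : involves G (subg_of A) -> involves_set G A.
Proof.
move=> [H [sH [fiH [f [f_hom f_onto]]]]].
exists H, (fun x => sgval (f x)); split=> //.
- by move=> x y Hx Hy; rewrite f_hom.
- by move=> x _; exact: subgP.
- move=> z Az; have [x [Hx fx]] := f_onto (subg A z).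
  by exists x; rewrite // fx subgK.
Qed.

Lemma involves_setS (A : {set gT}) (B : {group gT}) :
  B \subset A -> involves_set G A -> involves_set G B.
Proof.
move=> sBA [H [f [sH fiH f_hom fA f_onto]]].
exists (fun x => H x /\ f x \in B), f; split.
- split; first by rewrite (hom_on1 sH f_hom) group1; split=> //; exact: subgroup1.
  split=> [x y [Hx Bx] [Hy By]|x [Hx Bx]].
    by split; [exact: subgroupM | rewrite f_hom // groupM].
  by split; [exact: subgroupV | rewrite (hom_onV sH f_hom) // groupV].
- apply: finite_indexS (finite_index_kerf sH f_hom fiH) _ => x [Hx fx1].
  by rewrite fx1 group1.
- by move=> x y [Hx _] [Hy _]; exact: f_hom.
- by move=> x [].
- move=> z Bz; have [x Hx fx] := f_onto z (subsetP sBA z Bz).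
  by exists x; rewrite // fx.
Qed.

Lemma involves_morph (F F' : finGroupType) (h : F -> F') :
  {morph h : x y / x * y} -> (forall z, exists x, h x = z) -> involves G F -> involves G F'.
Proof.
move=> hM h_surj [H [sH [fiH [f [f_hom f_onto]]]]].
exists H; split=> //; split=> //; exists (fun x => h (f x)); split.
  by move=> x y Hx Hy; rewrite f_hom.
move=> z; have [y <-] := h_surj z; have [x [Hx <-]] := f_onto y.
by exists x.
Qed.

Lemma involves_set_injm (F : finGroupType) (A : {set gT}) (e : F -> gT) :
  injective e -> {morph e : x y / x * y} -> (forall x, e x \in A) ->
  involves_set G A -> involves G F.
Proof.
move=> e_inj eM eA invA.
have e1 : e 1 = 1 by apply: (mulgI (e 1)); rewrite -eM !mulg1.
have img_group : group_set (e @: [set: F]).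
  apply/group_setP; split=> [|_ _ /imsetP[x _ ->] /imsetP[y _ ->]].
    by rewrite -e1 imset_f ?inE.
  by rewrite -eM imset_f ?inE.
have sBA : Group img_group \subset A by apply/subsetP => _ /imsetP[x _ ->]; exact: eA.
have [H [f [sH fiH f_hom fB f_onto]]] := involves_setS sBA invA.
pose g x := odflt 1 [pick y | e y == f x].
have egE x : H x -> e (g x) = f x.
  move=> Hx; rewrite /g; case: pickP => [y /eqP //|none].
  by have /imsetP[y _ fxE] := fB x Hx; have := none y; rewrite fxE eqxx.
exists H; split=> //; split=> //; exists g; split.
- by move=> x y Hx Hy; apply: e_inj; rewrite eM !egE ?f_hom //; exact: subgroupM.
- move=> z; have [x Hx fx] := f_onto (e z) (imset_f _ (in_setT z)).
  by exists x; split=> //; apply: e_inj; rewrite egE.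
Qed.

Lemma involves_set_preim (N : AbsGroup) (i : N -> G) (A : {set gT})
    (G0 : G -> Prop) (f : G -> gT) :
  is_hom i -> is_subgroup G0 -> finite_index G0 -> hom_on G0 f ->
  (forall x, G0 x -> f x \in A) ->
  (forall z, z \in A -> exists2 n, G0 (i n) & f (i n) = z) -> involves_set N A.
Proof.
move=> i_hom sG0 fiG0 f_hom fA f_onto.
exists (fun n => G0 (i n)), (fun n => f (i n)); split=> //.
- exact: subgroup_preim.
- exact: finite_index_preim.
- by move=> x y Gx Gy; rewrite i_hom f_hom.
- by move=> x; exact: fA.
Qed.

Lemma involves_set_quotient (Q : AbsGroup) (p : G -> Q) (A : {set gT})
    (G0 : G -> Prop) (f : G -> gT) :
  is_hom p -> (forall q, exists g, p g = q) ->
  is_subgroup G0 -> finite_index G0 -> hom_on G0 f ->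
  (forall x, G0 x -> f x \in A) -> (forall z, z \in A -> exists2 x, G0 x & f x = z) ->
  (forall x, G0 x -> p x = gone Q -> f x = 1) -> involves_set Q A.
Proof.
move=> p_hom p_surj sG0 fiG0 f_hom fA f_onto f_ker.
have f_fiber x y : G0 x -> G0 y -> p x = p y -> f x = f y.
  move=> Gx Gy pxy; have := f_ker _ (subgroupM sG0 (subgroupV sG0 Gx) Gy).
  rewrite p_hom (homV p_hom) pxy gmulVg => /(_ erefl).
  rewrite f_hom ?(hom_onV sG0 f_hom) //; last exact: subgroupV.
  by move=> E; rewrite -(mulKVg (f x) (f y)) E mulg1.
have [ch chP] := partial_choice (gone G) (fun q x => G0 x /\ p x = q).
have chE x : G0 x -> f (ch (p x)) = f x.
  by move=> Gx; have [Gc pc] := chP _ _ (conj Gx erefl); exact: f_fiber.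
exists (fun q => exists2 x, G0 x & p x = q), (fun q => f (ch q)); split.
- exact: subgroup_image.
- exact: finite_index_image.
- move=> _ _ [x Gx <-] [y Gy <-].
  by rewrite -p_hom !chE ?f_hom //; exact: subgroupM.
- by move=> _ [x Gx <-]; rewrite chE //; exact: fA.
- move=> z /f_onto[x Gx <-].
  by exists (p x); [exists x | rewrite chE].
Qed.

End Involvement.

(** * Alternating groups *)

Section SumPerm.
Variable X : finType.

Definition sum_fun (s t : {perm X}) (u : X + X) : X + X :=
  match u with inl x => inl (s x) | inr x => inr (t x) end.

Lemma sum_fun_inj s t : injective (sum_fun s t).
Proof. by move=> [x|x] [y|y] //= [/perm_inj ->]. Qed.

Definition sum_perm s t : {perm X + X} := perm (@sum_fun_inj s t).

Lemma sum_permM s t s' t' :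
  sum_perm s t * sum_perm s' t' = sum_perm (s * s') (t * t').
Proof. by apply/permP => -[x|x]; rewrite permM !permE /= permM. Qed.

Definition swap_fun (u : X + X) : X + X :=
  match u with inl x => inr x | inr x => inl x end.

Lemma swap_funK : involutive swap_fun.
Proof. by case. Qed.

Definition swap_perm : {perm X + X} := perm (inv_inj swap_funK).

Lemma sum_permJ_swap s : sum_perm s 1 ^ swap_perm = sum_perm 1 s.
Proof.
rewrite conjgE; apply: (mulgI swap_perm); rewrite mulKVg.
by apply/permP => -[x|x]; rewrite !permM !permE /= ?perm1.
Qed.

Lemma odd_sum_perm_diag s : odd_perm (sum_perm s s) = false.
Proof.
have -> : sum_perm s s = sum_perm s 1 * sum_perm 1 s by rewrite sum_permM mulg1 mul1g.
by rewrite odd_permM -sum_permJ_swap odd_permJ addbb.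
Qed.

End SumPerm.

Section RegularPerm.
Variable F : finGroupType.

Definition rmul_fun (x : F) (u : F * 'I_3) : F * 'I_3 := (u.1 * x, u.2).

Lemma rmul_fun_inj x : injective (rmul_fun x).
Proof. by move=> [a i] [b j] [/mulIg -> ->]. Qed.

Definition rmul_perm x : {perm F * 'I_3} := perm (@rmul_fun_inj x).

Lemma rmul_permM : {morph rmul_perm : x y / x * y}.
Proof. by move=> x y; apply/permP => u; rewrite permM !permE /rmul_fun /= mulgA. Qed.

End RegularPerm.

(* The factor ['I_3] only serves to make the degree at least 5. *)
Lemma embed_Alt (F : finGroupType) : exists (T : finType) (e : F -> {perm T}),
  [/\ 4 < #|T|, injective e, {morph e : x y / x * y} & forall x, e x \in 'Alt_T].
Proof.
exists ((F * 'I_3) + (F * 'I_3))%type, (fun x => sum_perm (rmul_perm x) (rmul_perm x)).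
split.
- have : 0 < #|F| by apply/card_gt0P; exists 1.
  by rewrite card_sum card_prod card_ord; move: #|F|; lia.
- move=> x y /permP/(_ (inl (1, ord0))); rewrite !permE /= !permE /rmul_fun /=.
  by rewrite !mul1g => -[].
- by move=> x y; rewrite sum_permM rmul_permM.
- by move=> x; rewrite Alt_even odd_sum_perm_diag.
Qed.

Lemma center_Alt (T : finType) : 4 < #|T| -> 'Z('Alt_T) = 1.
Proof.
move=> T5; have /simpleP[_ simpleAlt] := simple_Alt5 T5.
have [//|ZAlt] := simpleAlt _ (center_normal 'Alt_T).
by have := abelian_sol (center_abelian 'Alt_T); rewrite ZAlt solvable_AltF.
Qed.

(** * Extensions *)

Section Extension.
Variables (N G Q : AbsGroup) (i : N -> G) (p : G -> Q).
Hypotheses (i_hom : is_hom i) (p_hom : is_hom p) (i_inj : injective i)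
  (p_surj : forall q, exists g, p g = q)
  (ker_p : forall g, p g = gone Q <-> exists n, i n = g).
Variables (gT : finGroupType) (A : {group gT}).

Lemma kernel_conj g n : exists m, i m = ginv g ** (i n ** g).
Proof.
apply/ker_p; rewrite !p_hom (homV p_hom) (proj2 (ker_p (i n))); last by exists n.
by rewrite gmul1g gmulVg.
Qed.

Section KernelImage.
Variables (G0 : G -> Prop) (f : G -> gT).
Hypotheses (sG0 : is_subgroup G0) (f_hom : hom_on G0 f)
  (fA : forall x, G0 x -> f x \in A)
  (f_onto : forall z, z \in A -> exists2 x, G0 x & f x = z).

Definition kernel_image : {set gT} := [set z | `[< exists2 n, G0 (i n) & f (i n) = z >]].

Lemma kernel_image_group_set : group_set kernel_image.
Proof.
apply/group_setP; split=> [|x y]; rewrite !inE.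
  apply/asboolP; exists (gone N); rewrite (hom1 i_hom) ?(hom_on1 sG0 f_hom) //.
  exact: subgroup1.
move=> /asboolP[n Gn <-] /asboolP[m Gm <-]; apply/asboolP.
by exists (n ** m); rewrite i_hom ?f_hom //; exact: subgroupM.
Qed.

Definition kernel_image_group := Group kernel_image_group_set.

Lemma kernel_image_normal : kernel_image_group <| A.
Proof.
apply/andP; split.
  by apply/subsetP => z; rewrite inE => /asboolP[n Gn <-]; exact: fA.
apply/subsetP => a Aa; rewrite inE; apply/subsetP => _ /imsetP[z + ->].
rewrite inE => /asboolP[n Gn <-].
have [g Gg <-] := f_onto Aa; have [m Em] := kernel_conj g n.
have Gg' := subgroupV sG0 Gg.
rewrite inE; apply/asboolP; exists m; rewrite Em.
  by apply: subgroupM Gg' (subgroupM sG0 Gn Gg).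
by rewrite !f_hom ?(hom_onV sG0 f_hom) //; exact: subgroupM.
Qed.

End KernelImage.

Lemma involves_set_kernel_or_quotient :
  simple A -> involves_set G A -> involves_set N A \/ involves_set Q A.
Proof.
move=> /simpleP[_ simpleA] [G0 [f [sG0 fiG0 f_hom fA f_onto]]].
have [K1|KA] := simpleA _ (kernel_image_normal sG0 f_hom fA f_onto).
- right; apply: (involves_set_quotient p_hom p_surj sG0 fiG0 f_hom fA f_onto).
  move=> x Gx /ker_p[n Ex].
  have : f x \in kernel_image_group sG0 f_hom.
    by rewrite inE; apply/asboolP; exists n; rewrite Ex.
  by rewrite K1 => /set1P.
- left; apply: (involves_set_preim i_hom sG0 fiG0 f_hom fA) => z.
  by rewrite -KA inE => /asboolP.
Qed.

Section Lift.
Variables (N0 : N -> Prop) (f : N -> gT).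
Hypotheses (sN0 : is_subgroup N0) (f_hom : hom_on N0 f)
  (fA : forall n, N0 n -> f n \in A)
  (f_onto : forall z, z \in A -> exists2 n, N0 n & f n = z).
Hypothesis ZA : 'Z(A) = 1.
Variable c : G -> N -> N.
Hypothesis cE : forall g n, i (c g n) = ginv g ** (i n ** g).

Lemma conj_hom g : is_hom (c g).
Proof. by move=> m n; apply: i_inj; rewrite i_hom !cE i_hom !gmulA gmulgK. Qed.

Lemma conjM g h n : c (g ** h) n = c h (c g n).
Proof. by apply: i_inj; rewrite !cE ginvM !gmulA. Qed.

Lemma conj1 n : c (gone G) n = n.
Proof. by apply: i_inj; rewrite cE ginv1 gmul1g gmulg1. Qed.

Lemma conj_inner u n : c (i u) n = ginv u ** (n ** u).
Proof. by apply: i_inj; rewrite cE !i_hom (homV i_hom). Qed.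

Let stab g := preserves N0 f (c g).

Lemma stab_subgroup : is_subgroup stab.
Proof. exact: preserves_subgroup conjM conj1. Qed.

Lemma stab_inner_trivial u : N0 u -> stab (i u) -> f u = 1.
Proof.
move=> Nu Su; have : f u \in 'Z(A).
  apply/centerP; split=> [|_ /f_onto[m Nm <-]]; first exact: fA.
  have [Nu' Nmu] := (subgroupV sN0 Nu, subgroupM sN0 Nm Nu).
  have [_ fE] := Su m; move: (fE Nm); rewrite conj_inner.
  rewrite !f_hom ?(hom_onV sN0 f_hom) // => E.
  by rewrite /commute -{1}E mulKVg.
by rewrite ZA => /set1P.
Qed.

Definition lift_dom x := exists g n, stab g /\ N0 n /\ x = g ** i n.

Lemma lift_mulE g n g' n' : g ** i n ** (g' ** i n') = g ** g' ** i (c g' n ** n').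
Proof. by rewrite i_hom cE !gmulA gmulgK. Qed.

Lemma lift_dom_subgroup : is_subgroup lift_dom.
Proof.
split; [|split].
- exists (gone G), (gone N); rewrite (hom1 i_hom) gmulg1.
  by split; [exact: subgroup1 stab_subgroup | split; [exact: subgroup1|]].
- move=> _ _ [g [n [Sg [Nn ->]]]] [g' [n' [Sg' [Nn' ->]]]].
  exists (g ** g'), (c g' n ** n'); split; first exact: subgroupM stab_subgroup Sg Sg'.
  by split; [apply: subgroupM => //; apply/(Sg' n).1 | exact: lift_mulE].
- move=> _ [g [n [Sg [Nn ->]]]].
  have Sg' := subgroupV stab_subgroup Sg.
  exists (ginv g), (c (ginv g) (ginv n)); split=> //.
  split; first by apply/(Sg' (ginv n)).1; exact: subgroupV.
  by rewrite cE (homV i_hom) ginvK ginvM !gmulA gmulVg gmul1g.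
Qed.

Lemma lift_fiber g n g' n' : stab g -> N0 n -> stab g' -> N0 n' ->
  g ** i n = g' ** i n' -> f n = f n'.
Proof.
move=> Sg Nn Sg' Nn' E.
have Eu : ginv g' ** g = i (n' ** ginv n).
  by rewrite i_hom (homV i_hom) -(gmulgK g (i n)) E -gmulA gmulKg.
have Nu : N0 (n' ** ginv n) := subgroupM sN0 Nn' (subgroupV sN0 Nn).
have Su : stab (i (n' ** ginv n)).
  by rewrite -Eu; exact: subgroupM stab_subgroup (subgroupV stab_subgroup Sg') Sg.
have := stab_inner_trivial Nu Su.
rewrite f_hom ?(hom_onV sN0 f_hom) //; last exact: subgroupV.
by move=> E1; rewrite -[f n'](mulgKV (f n)) E1 mul1g.
Qed.

Lemma involves_set_lift : finitely_generated N -> finite_index N0 -> involves_set G A.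
Proof.
move=> fgN fiN0.
have [ch chP] := partial_choice (gone G, gone N)
  (fun x gn => stab gn.1 /\ N0 gn.2 /\ x = gn.1 ** i gn.2).
have chE g n : stab g -> N0 n -> f (ch (g ** i n)).2 = f n.
  move=> Sg Nn; have [Sc [Nc Ec]] := chP _ (g, n) (conj Sg (conj Nn erefl)).
  exact: lift_fiber Sc Nc Sg Nn (esym Ec).
exists lift_dom, (fun x => f (ch x).2); split.
- exact: lift_dom_subgroup.
- apply: finite_indexS (finite_index_preserves sN0 f_hom conj_hom conjM conj1 fgN fiN0) _.
  move=> g Sg; exists g, (gone N); rewrite (hom1 i_hom) gmulg1.
  by split=> //; split=> //; exact: subgroup1.
- move=> _ _ [g [n [Sg [Nn ->]]]] [g' [n' [Sg' [Nn' ->]]]].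
  have Nc : N0 (c g' n) by apply/(Sg' n).1.
  rewrite lift_mulE !chE ?f_hom ?(Sg' n).2 //; last exact: subgroupM.
  exact: subgroupM stab_subgroup Sg Sg'.
- by move=> _ [g [n [Sg [Nn ->]]]]; rewrite chE //; exact: fA.
- move=> z /f_onto[n Nn <-]; have S1 := subgroup1 stab_subgroup.
  by exists (gone G ** i n); [exists (gone G), n | rewrite chE].
Qed.

End Lift.

Lemma involves_set_ext :
  finitely_generated N -> 'Z(A) = 1 -> involves_set N A -> involves_set G A.
Proof.
move=> fgN ZA [N0 [f [sN0 fiN0 f_hom fA f_onto]]].
have [c cE] : {c : G -> N -> N & forall g n, i (c g n) = ginv g ** (i n ** g)}.
  apply: (@choice _ _ (fun g cg => forall n, i (cg n) = ginv g ** (i n ** g))) => g.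
  by have [cg cgE] := choice (kernel_conj g); exists cg.
exact: (involves_set_lift sN0 f_hom fA f_onto ZA cE fgN fiN0).
Qed.

End Extension.

Theorem lemma1p5 (N G Q : AbsGroup) (i : N -> G) (p : G -> Q) :
  short_exact i p ->
  (involves_all_finite G -> involves_all_finite N \/ involves_all_finite Q) /\
  (finitely_generated N -> involves_all_finite N -> involves_all_finite G).
Proof.
move=> [i_hom [p_hom [i_inj [p_surj ker_p]]]]; split.
- move=> invG; have [|/existsNP[F1 notN]] := pselect (involves_all_finite N).
    by left.
  right=> F2; have [T [e [T5 e_inj eM eA]]] := embed_Alt (F1 * F2)%type.
  have [invN|invQ] := involves_set_kernel_or_quotient i_hom p_hom p_surj ker_p
    (simple_Alt5 T5) (involves_subg_set (invG _)).
  + case: notN.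
    apply: (involves_morph (h := fst) _ _ (involves_set_injm e_inj eM eA invN)) => [//|z].
    by exists (z, 1).
  + apply: (involves_morph (h := snd) _ _ (involves_set_injm e_inj eM eA invQ)) => [//|z].
    by exists (1, z).
- move=> fgN invN F; have [T [e [T5 e_inj eM eA]]] := embed_Alt F.
  apply: (involves_set_injm e_inj eM eA).
  exact: (involves_set_ext i_hom p_hom i_inj ker_p fgN (center_Alt T5)
    (involves_subg_set (invN _))).
Qed.
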